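(* Let $r$ and $m$ be positive integers. Then there exist polynomials $F$ and $G$, independent of $n$, of degrees $m$ and $r-1$ respectively, such that for every positive integer $n$, \[ \sum_{1\le i_1\le i_2\le\cdots\le i_{2r}\le n}(-1)^{i_1}\, i_1^{2m}=(-1)^n F\big(n(n+2r)\big)+G\big(n(n+2r)\big). \]
   Context: The left-hand side is the $2r$-fold alternating power sum ${\sum}^{2r}(-1)^n n^{2m}$, where ${\sum}^{s}(-1)^n(n+x)^m$ is defined as $\sum_{1\le i_1\le\cdots\le i_s\le n}(-1)^{i_1}(i_1+x)^m$. *)

From mathcomp Require Import all_boot all_order all_algebra.
Set Implicit Arguments. Unset Strict Implicit. Unset Printing Implicit Defensive.
Import Order.TTheory GRing.Theory Num.Theory.
Local Open Scope ring_scope.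

(* Iterated sum: for s >= 1,
   iter_sum s f n = \sum_{1 <= i_1 <= i_2 <= ... <= i_s <= n} f i_1,
   computed by summing over the largest index i_s = k:
   iter_sum (s+1) f n = \sum_{k=1}^{n} iter_sum s f k,
   with the convention iter_sum 0 f k = f k (so iter_sum 1 f n = \sum_{i=1}^n f i). *)
Fixpoint iter_sum (s : nat) (f : nat -> rat) (n : nat) : rat :=
  match s with
  | 0 => f n
  | s'.+1 => \sum_(1 <= k < n.+1) iter_sum s' f k
  end.

From mathcomp Require Import all_boot all_order all_algebra.
From mathcomp Require Import ring zify.
Import Order.TTheory GRing.Theory Num.Theory.
Set Implicit Arguments. Unset Strict Implicit. Unset Printing Implicit Defensive.
Local Open Scope ring_scope.

(* Write S_s(n), the s-fold sum, as (-1)^n A_s(n) + B_s(n) with polynomials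
   A_s, B_s.  Going from s to s+1 means solving A'(x) + A'(x-1) = A_s(x) and
   B'(x) - B'(x-1) = B_s(x), with the constant fixed by S_{s+1}(0) = 0: the
   first operator preserves degrees and is invertible, the second lowers
   degrees by one and is onto.  Continued to negative integers, the
   representation vanishes at 0, -1, ..., -s, which forces the reflection
   symmetries A_s(-s-x) = A_s(x) and B_s(-s-x) = (-1)^s B_s(x).  For s = 2r both
   polynomials are invariant under x -> -2r-x, i.e. polynomials in x(x+2r).
   Degrees: A_s keeps degree 2m, B_1 = 0, and B_s has degree s-2 once the
   constant B_2 is nonzero.  That is seen mod 3: u(n) -> u(n+3) + u(n) kills
   (-1)^n A(n) after finitely many steps and doubles constants, whereas on S_2
   it gives a sequence = -1 (mod 3), and it maps residues +-1 to -+1. *)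

Section ShiftPoly.
Variable R : numFieldType.
Implicit Types (p q : {poly R}) (a c x : R).

Lemma eq_poly_horner p q : (forall x, p.[x] = q.[x]) -> p = q.
Proof.
move=> pq; apply/eqP; rewrite -subr_eq0; apply/eqP.
apply: (@roots_geq_poly_eq0 _ _ [seq i%:R | i <- iota 0 (size (p - q))]).
- by apply/allP => _ /mapP [i _ ->]; rewrite /root hornerD hornerN pq subrr.
- by rewrite map_inj_uniq ?iota_uniq // => i j /eqP; rewrite eqr_nat => /eqP.
- by rewrite size_map size_iota.
Qed.

Lemma size_poly_coef_neq0 p n : (size p <= n.+1)%N -> p`_n != 0 -> size p = n.+1.
Proof.
move=> le_p pn0; apply/eqP; rewrite eqn_leq le_p ltnNge.
by apply: contra pn0 => /leq_sizeP ->.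
Qed.

Lemma size_polyB_coef p q n : (size p <= n.+1)%N -> (size q <= n.+1)%N ->
  p`_n = q`_n -> (size (p - q)%R <= n)%N.
Proof.
move=> le_p le_q pq; apply/leq_sizeP => j; rewrite leq_eqVlt => /orP[/eqP <-|lt_nj].
  by rewrite coefB pq subrr.
rewrite nth_default // (leq_trans (size_polyD _ _)) // size_polyN.
by rewrite geq_max !(leq_trans _ lt_nj).
Qed.

Lemma poly_surj (T : {poly R} -> {poly R}) k :
    {morph T : p q / p + q} -> (forall a p, T (a *: p) = a *: T p) ->
    (forall p, size (T p) = (size p - k)%N) ->
  forall p, exists q, T q = p.
Proof.
move=> TD TZ Tsize p; elim: (size p) {-2}p (leqnn (size p)) => [|n IH] {}p.
  rewrite size_poly_leq0 => /eqP ->; exists 0.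
  by apply/eqP; rewrite -size_poly_eq0 Tsize size_poly0.
rewrite leq_eqVlt ltnS => /orP[/eqP sz_p|]; last exact: IH.
pose t := T 'X^(n + k).
have sz_t : size t = n.+1 by rewrite Tsize size_polyXn -addSn addnK.
have t0 : lead_coef t != 0 by rewrite lead_coef_eq0 -size_poly_gt0 sz_t.
pose q1 := (lead_coef p / lead_coef t) *: 'X^(n + k).
have [|q2 Tq2] := IH (p - T q1).
  rewrite size_polyB_coef ?sz_p // /q1 TZ ?(leq_trans (size_scale_leq _ _)) ?sz_t //.
  have top (u : {poly R}) : size u = n.+1 -> u`_n = lead_coef u.
    by rewrite lead_coefE => ->.
  by rewrite coefZ -/t !top ?divfK.
by exists (q1 + q2); rewrite TD Tq2 addrC subrK.
Qed.

Definition shiftp c p := p \Po ('X + c%:P).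
Definition sump c p := p + shiftp c p.
Definition diffp c p := p - shiftp c p.

Lemma horner_shiftp c p x : (shiftp c p).[x] = p.[x + c].
Proof. by rewrite /shiftp horner_comp !hornerE. Qed.

Lemma horner_sump c p x : (sump c p).[x] = p.[x] + p.[x + c].
Proof. by rewrite /sump hornerD horner_shiftp. Qed.

Lemma horner_diffp c p x : (diffp c p).[x] = p.[x] - p.[x + c].
Proof. by rewrite /diffp hornerD hornerN horner_shiftp. Qed.

Lemma size_shiftp c p : size (shiftp c p) = size p.
Proof. by rewrite size_comp_poly2 // size_XaddC. Qed.

Lemma lead_coef_shiftp c p : lead_coef (shiftp c p) = lead_coef p.
Proof. by rewrite lead_coef_comp ?size_XaddC // lead_coefXaddC expr1n mulr1. Qed.

Lemma coef_shiftp_lead c p : (shiftp c p)`_(size p).-1 = lead_coef p.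
Proof. by rewrite -(lead_coef_shiftp c) lead_coefE size_shiftp. Qed.

Lemma shiftpD c : {morph shiftp c : p q / p + q}.
Proof. by move=> p q; rewrite /shiftp comp_polyD. Qed.

Lemma shiftpZ c a p : shiftp c (a *: p) = a *: shiftp c p.
Proof. by rewrite /shiftp comp_polyZ. Qed.

Lemma shiftpC c a : shiftp c a%:P = a%:P.
Proof. by rewrite /shiftp comp_polyC. Qed.

Lemma shiftp_MXaddC c p a :
  shiftp c (p * 'X + a%:P) = shiftp c p * 'X + (c *: shiftp c p + a%:P).
Proof. by rewrite /shiftp comp_poly_MXaddC mulrDr addrA [_ * c%:P]mulrC mul_polyC. Qed.

Lemma coef_shiftp_subleading c p :
  (shiftp c p)`_(size p).-2 = p`_(size p).-2 + c * (size p).-1%:R * lead_coef p.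
Proof.
elim/poly_ind: p => [|p a IHp].
  by rewrite /shiftp comp_poly0 coef0 lead_coef0 !mulr0 addr0.
have [->|p0] := eqVneq p 0.
  by rewrite mul0r add0r shiftpC size_polyC; case: (a != 0); rewrite mulr0 mul0r addr0.
rewrite shiftp_MXaddC size_MXaddC (negPf p0) /= lead_coefDl ?lead_coefMX; last first.
  by rewrite size_mulX // ltnS (leq_trans (size_polyC_leq1 _)) // size_poly_gt0.
rewrite !coefD !coefMX coefZ coefC coef_shiftp_lead; move: IHp; rewrite (polySpred p0).
case: (size p).-1 => [|n] /= IHp; first by ring.
by rewrite IHp -[n.+2]addn1 -[n.+1]addn1 !natrD; ring.
Qed.

Lemma size_sump c p : size (sump c p) = size p.
Proof.
have [->|p0] := eqVneq p 0; first by rewrite /sump /shiftp comp_poly0 addr0.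
rewrite [RHS](polySpred p0); apply: size_poly_coef_neq0.
  by rewrite -(polySpred p0) (leq_trans (size_polyD _ _)) // size_shiftp maxnn.
by rewrite coefD coef_shiftp_lead -mulr2n mulrn_eq0 /= lead_coef_eq0.
Qed.

Lemma size_diffp c p : c != 0 -> size (diffp c p) = (size p).-1.
Proof.
move=> c0; have [lt_p1|lt1p] := leqP (size p) 1.
  rewrite /diffp (size1_polyC lt_p1) shiftpC subrr size_poly0 size_polyC.
  by case: (_ != 0).
have sz : (size p).-1 = (size p).-2.+1 by case: (size p) lt1p => [|[]].
rewrite sz; apply: size_poly_coef_neq0.
  rewrite -sz; apply/leq_sizeP => j; rewrite leq_eqVlt => /orP[/eqP <-|lt_j].
    by rewrite coefB coef_shiftp_lead lead_coefE subrr.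
  rewrite nth_default // (leq_trans (size_polyD _ _)) // size_polyN size_shiftp maxnn.
  by rewrite (leq_trans _ lt_j) // leqSpred.
rewrite coefB coef_shiftp_subleading opprD addNKr oppr_eq0 !mulf_neq0 ?lead_coef_eq0 //.
  by rewrite sz pnatr_eq0.
by rewrite -size_poly_gt0 ltnW.
Qed.

Lemma size_iter_diffp c p k : c != 0 -> size (iter k (diffp c) p) = (size p - k)%N.
Proof.
by move=> c0; elim: k => [|k IHk]; rewrite ?subn0 // iterS size_diffp // IHk subnS.
Qed.

Lemma sump_surj c p : exists q, sump c q = p.
Proof.
apply: (@poly_surj _ 0) => [q r|b q|q]; last by rewrite size_sump subn0.
  by rewrite /sump shiftpD addrACA.
by rewrite /sump shiftpZ scalerDr.
Qed.

Lemma diffp_surj c p : c != 0 -> exists q, diffp c q = p.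
Proof.
move=> c0; apply: (@poly_surj _ 1) => [q r|b q|q]; last by rewrite size_diffp // subn1.
  by rewrite /diffp shiftpD opprD addrACA.
by rewrite /diffp shiftpZ scalerBr.
Qed.

Lemma horner_comp_reflect p a x : (p \Po (a%:P - 'X)).[x] = p.[a - x].
Proof. by rewrite horner_comp !hornerE. Qed.

Lemma sump_reflect c a e p :
    (forall x, (sump c p).[a - x] = e * (sump c p).[x]) ->
  forall x, p.[a + c - x] = e * p.[x].
Proof.
move=> sym x; pose q := p \Po ((a + c)%:P - 'X) - e *: p.
suff /(congr1 (horner^~ x)) : q = 0.
  by rewrite hornerD hornerN hornerZ horner_comp_reflect horner0 => /subr0_eq.
have sumq0 : sump c q = 0.
  apply: eq_poly_horner => z.
  rewrite horner0 horner_sump !(hornerD, hornerN, hornerZ) !horner_comp_reflect.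
  rewrite (_ : a + c - (z + c) = a - z); last by ring.
  rewrite (_ : a + c - z = a - z + c); last by ring.
  by have := sym z; rewrite !horner_sump => /(canRL (addrK _)) ->; ring.
by apply/eqP; rewrite -size_poly_eq0 -(size_sump c) sumq0 size_poly0.
Qed.

Lemma diffp_reflect c a e p : c != 0 ->
    (forall x, (diffp c p).[a - x] = e * (diffp c p).[x]) ->
  forall x y, p.[a + c - x] + e * p.[x] = p.[a + c - y] + e * p.[y].
Proof.
move=> c0 sym x y; pose q := p \Po ((a + c)%:P - 'X) + e *: p.
have diffq0 : diffp c q = 0.
  apply: eq_poly_horner => z.
  rewrite horner0 horner_diffp !(hornerD, hornerN, hornerZ) !horner_comp_reflect.
  rewrite (_ : a + c - (z + c) = a - z); last by ring.
  rewrite (_ : a + c - z = a - z + c); last by ring.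
  by have := sym z; rewrite !horner_diffp => /(canRL (subrK _)) ->; ring.
have qC z : q.[z] = q`_0.
  rewrite {1}(@size1_polyC _ q) ?hornerC //; have := size_diffp q c0.
  by rewrite diffq0 size_poly0; case: (size q) => [|[]].
move: (qC x) (qC y).
by rewrite !(hornerD, hornerN, hornerZ) !horner_comp_reflect => -> ->.
Qed.

Definition alt_eval p q (b : bool) x := (-1) ^+ b * p.[x] + q.[x].

Lemma alt_eval_step p q b x :
  alt_eval p q b x - alt_eval p q (~~ b) (x - 1) =
  alt_eval (sump (-1) p) (diffp (-1) q) b x.
Proof. by rewrite /alt_eval horner_sump horner_diffp signrN; ring. Qed.

Lemma reflect_invariant_polyE k p :
    (forall x, p.[- k - x] = p.[x]) -> odd (size p) ->
  exists2 F : {poly R}, size F = uphalf (size p) & forall x, p.[x] = F.[x * (x + k)].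
Proof.
move=> sym odd_p; pose h := k / 2; pose q := p \Po ('X - h%:P).
have hq y : q.[y] = p.[y - h] by rewrite horner_comp !hornerE.
have q_even y : q.[- y] = q.[y] by rewrite !hq -sym; congr p.[_]; rewrite /h; field.
have qE y : q.[y] = (even_poly q).[y ^+ 2].
  have dq z : q.[z] = (even_poly q).[z ^+ 2] + (odd_poly q).[z ^+ 2] * z.
    by rewrite -{1}(poly_even_odd q) hornerD hornerM !horner_comp !hornerE.
  have := dq (- y); rewrite q_even sqrrN dq => /addrI /eqP.
  rewrite mulrN -subr_eq0 opprK -mulr2n mulrn_eq0 /= mulf_eq0.
  by case/orP=> /eqP ->; rewrite ?mul0r ?mulr0 addr0.
exists (even_poly q \Po ('X + (h ^+ 2)%:P)).
  have sq : size q = size p by rewrite size_comp_poly2 ?size_XsubC.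
  by rewrite size_comp_poly2 ?size_XaddC // size_even_poly_eq sq.
move=> x; rewrite horner_comp !hornerE (_ : p.[x] = q.[x + h]); last by rewrite hq addrK.
by rewrite qE; congr (_.[_]); rewrite /h; field.
Qed.
End ShiftPoly.

Lemma iter_sum0 s f : iter_sum s.+1 f 0 = 0.
Proof. by rewrite /= big_geq. Qed.

Lemma iter_sumS s f n : iter_sum s.+1 f n.+1 = iter_sum s.+1 f n + iter_sum s f n.+1.
Proof. by rewrite /= big_nat_recr. Qed.

Definition alt_pow (m i : nat) : rat := (-1) ^+ i * i%:R ^+ (2 * m).

Definition eqmod3 (x y : rat) := exists z : int, x = y + 3 * z%:~R.

Lemma eqmod3_refl x : eqmod3 x x.
Proof. by exists 0; rewrite mulr0 addr0. Qed.

Lemma eqmod3_add x y x' y' : eqmod3 x y -> eqmod3 x' y' -> eqmod3 (x + x') (y + y').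
Proof. by move=> [z ->] [z' ->]; exists (z + z'); rewrite rmorphD /=; ring. Qed.

Lemma eqmod3_trans x y t : eqmod3 x y -> eqmod3 y t -> eqmod3 x t.
Proof. by move=> [z ->] [z' ->]; exists (z' + z); rewrite rmorphD /=; ring. Qed.

Lemma not_eqmod3_0_sign k : ~ eqmod3 0 ((-1) ^+ k).
Proof.
case=> z /esym/eqP; rewrite -signr_odd.
have -> : (-1) ^+ odd k + 3 * z%:~R = ((-1) ^+ odd k + 3 * z)%:~R :> rat.
  by rewrite rmorphD rmorphM rmorph_sign.
by rewrite intr_eq0; case: (odd k); rewrite ?expr1 ?expr0; lia.
Qed.

Lemma eqmod3_nat a b : (a = b %[mod 3])%N -> eqmod3 a%:R b%:R.
Proof.
move=> ab; exists ((a %/ 3)%:Z - (b %/ 3)%:Z).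
rewrite {1}(divn_eq a 3) {1}(divn_eq b 3) ab !natrD !natrM rmorphB /= !pmulrn; ring.
Qed.

Lemma eqmod3_signr k x y : eqmod3 x y -> eqmod3 ((-1) ^+ k * x) ((-1) ^+ k * y).
Proof. by move=> [z ->]; exists ((-1) ^+ k * z); rewrite rmorphM rmorph_sign /=; ring. Qed.

Definition add_shift3 (u : nat -> rat) n := u n.+3 + u n.

Lemma eqmod3_add_shift3_iter_sum s f :
    (forall n, eqmod3 (add_shift3 (iter_sum s f) n) 0) ->
  forall n, eqmod3 (add_shift3 (iter_sum s.+1 f) n) (iter_sum s.+1 f 3).
Proof.
move=> H; elim=> [|n IH]; first by rewrite /add_shift3 iter_sum0 addr0; exact: eqmod3_refl.
rewrite /add_shift3 (iter_sumS _ _ n.+3) (iter_sumS _ _ n) addrACA -[X in eqmod3 _ X]addr0.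
exact: eqmod3_add IH (H n.+1).
Qed.

Lemma iter_add_shift3_alt (u : nat -> rat) A b :
    (forall n, u n = (-1) ^+ n * A.[n%:R] + b) ->
  forall k n, iter k add_shift3 u n = (-1) ^+ n * (iter k (diffp 3) A).[n%:R] + 2 ^+ k * b.
Proof.
move=> uE; elim=> [|k IHk] n; first by rewrite /= uE mul1r.
have sign3 : (-1) ^+ n.+3 = - (-1) ^+ n :> rat by rewrite !exprS; ring.
have nat3 : n.+3%:R = n%:R + 3 :> rat by rewrite -addn3 natrD.
by rewrite [LHS]/= /add_shift3 !IHk [in RHS]iterS horner_diffp sign3 nat3 exprS; ring.
Qed.

Lemma eqmod3_add_shift3 u k :
  (forall n, eqmod3 (u n) ((-1) ^+ k)) -> forall n, eqmod3 (add_shift3 u n) ((-1) ^+ k.+1).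
Proof.
move=> uE n; apply: eqmod3_trans (eqmod3_add (uE n.+3) (uE n)) _.
by exists ((-1) ^+ k); rewrite rmorph_sign exprS; ring.
Qed.

Section AltPowSums.
Variable m : nat.
Hypothesis m_gt0 : (0 < m)%N.

Lemma add_shift3_alt_pow n : eqmod3 (add_shift3 (alt_pow m) n) 0.
Proof.
have /eqmod3_nat/(eqmod3_signr n.+1) : (n.+3 ^ (2 * m) = n ^ (2 * m) %[mod 3])%N.
  by rewrite -modnXm -addn3 modnDr modnXm.
move=> /eqmod3_add /(_ (eqmod3_refl (alt_pow m n))).
rewrite /add_shift3 /alt_pow !natrX [X in eqmod3 _ X](_ : _ = 0); last by rewrite exprS; ring.
by rewrite (_ : (-1) ^+ n.+3 = (-1) ^+ n.+1 :> rat) // !exprS; ring.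
Qed.

Lemma iter_sum_alt_pow_3 :
  eqmod3 (iter_sum 1 (alt_pow m) 3) 0 /\ eqmod3 (iter_sum 2 (alt_pow m) 3) (-1).
Proof.
have f1 : alt_pow m 1 = -1 by rewrite /alt_pow expr1 expr1n mulr1.
have [z2 f2] : eqmod3 (alt_pow m 2) 1.
  rewrite /alt_pow -signr_odd /= expr0 mul1r -natrX; apply: (@eqmod3_nat _ 1).
  by rewrite expnM -modnXm (_ : 2 ^ 2 %% 3 = 1)%N // exp1n.
have [z3 f3] : eqmod3 (alt_pow m 3) 0.
  rewrite /alt_pow -natrX -[0](mulr0 ((-1) ^+ 3)); apply/eqmod3_signr/(@eqmod3_nat _ 0).
  by rewrite -(@prednK (2 * m)) ?muln_gt0 ?m_gt0 // expnS modnMr.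
rewrite !(iter_sumS 1) !(iter_sumS 0) !iter_sum0 /= f1 f2 f3; split.
  by exists (z2 + z3); rewrite rmorphD /=; ring.
by exists (z2 + z2 + z3); rewrite !rmorphD /=; ring.
Qed.

Lemma add_shift3_iter_sum_alt_pow n : eqmod3 (add_shift3 (iter_sum 2 (alt_pow m)) n) (-1).
Proof.
have [S1_3 S2_3] := iter_sum_alt_pow_3.
apply: eqmod3_trans S2_3; apply: eqmod3_add_shift3_iter_sum => {}n.
apply: eqmod3_trans S1_3; apply: eqmod3_add_shift3_iter_sum; exact: add_shift3_alt_pow.
Qed.

Lemma iter_sum2_alt_pow_const_neq0 A b :
  (forall n, iter_sum 2 (alt_pow m) n = (-1) ^+ n * A.[n%:R] + b) -> b != 0.
Proof.
move=> S2E; apply/eqP => b0.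
have cong k n : eqmod3 (iter k.+1 add_shift3 (iter_sum 2 (alt_pow m)) n) ((-1) ^+ k.+1).
  elim: k n => [|k IHk] n; first exact: add_shift3_iter_sum_alt_pow.
  exact: eqmod3_add_shift3.
move: (cong (size A) 0%N); rewrite (iter_add_shift3_alt S2E) b0 mulr0 addr0.
have /size_poly_leq0P -> : (size (iter (size A).+1 (diffp 3) A) <= 0)%N.
  by rewrite size_iter_diffp // subnS subnn.
by rewrite horner0 mulr0; apply: not_eqmod3_0_sign.
Qed.

Definition alt_rep s (A B : {poly rat}) : Prop := [/\
  forall n, iter_sum s (alt_pow m) n = alt_eval A B (odd n) n%:R,
  forall j, (j <= s)%N -> alt_eval A B (odd j) (- j%:R) = 0,
  forall x, A.[- s%:R - x] = A.[x] &
  forall x, B.[- s%:R - x] = (-1) ^+ s * B.[x]].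

Lemma alt_rep0 : alt_rep 0 'X^(2 * m) 0.
Proof.
split=> [n|j|x|x]; rewrite ?horner0 ?mulr0 //.
- by rewrite /alt_eval horner0 addr0 hornerXn signr_odd.
- rewrite leqn0 => /eqP ->; rewrite /alt_eval horner0 addr0 hornerXn oppr0 expr0n.
  by rewrite muln_eq0 /= eqn0Ngt m_gt0 mulr0.
- by rewrite oppr0 sub0r !hornerXn !exprM sqrrN.
Qed.

Lemma alt_rep_step s A B :
  alt_rep s (sump (-1) A) (diffp (-1) B) -> alt_eval A B false 0 = 0 -> alt_rep s.+1 A B.
Proof.
move=> [SE vanish symA symB] AB0.
have natS j : - j.+1%:R = - j%:R - 1 :> rat by rewrite -natr1 opprD.
have vanishS j : (j <= s.+1)%N -> alt_eval A B (odd j) (- j%:R) = 0.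
  elim: j => [|j IHj] le_js; first by rewrite oppr0.
  have := alt_eval_step A B (odd j) (- j%:R).
  by rewrite vanish // IHj 1?ltnW // natS sub0r => /eqP; rewrite oppr_eq0 => /eqP.
have symAS x : A.[- s.+1%:R - x] = A.[x].
  rewrite natS -[A.[x]]mul1r; apply: (sump_reflect (c := -1) (a := - s%:R)) => y.
  by rewrite mul1r symA.
split=> // [n|x].
  elim: n => [|n IHn]; first by rewrite iter_sum0 AB0.
  rewrite iter_sumS IHn SE -alt_eval_step /= negbK -natr1 addrK.
  by rewrite addrC subrK.
have := diffp_reflect (a := - s%:R) (e := (-1) ^+ s) _ symB x 0.
rewrite -natS subr0 => /(_ isT) /(canRL (addrK _)) ->.
have A_end : A.[- s.+1%:R] = A.[0] by rewrite -(symAS 0) subr0.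
move/eqP: AB0; rewrite /alt_eval expr0 mul1r addr_eq0 => /eqP A0.
move/eqP: (vanishS s.+1 (leqnn _)); rewrite /alt_eval addrC addr_eq0 => /eqP ->.
by rewrite A_end A0 signr_odd exprS; ring.
Qed.

Lemma exists_alt_rep s :
  exists A B, [/\ alt_rep s A B, size A = (2 * m).+1 & size B = s.-1].
Proof.
elim: s => [|s [A [B [rep sizeA sizeB]]]].
  by exists 'X^(2 * m), 0; rewrite size_polyXn size_poly0; split; first exact: alt_rep0.
have [A' sumA'] := sump_surj (-1) A.
have [D diffD] : exists D, diffp (-1) D = B by apply: diffp_surj; rewrite oppr_eq0.
pose B' := D + (- (A'.[0] + D.[0]))%:P.
have diffB' : diffp (-1) B' = B.
  by rewrite /diffp shiftpD shiftpC opprD addrACA subrr addr0.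
have rep' : alt_rep s.+1 A' B'.
  apply: alt_rep_step; first by rewrite sumA' diffB'.
  by rewrite /alt_eval hornerD hornerC expr0 mul1r; ring.
exists A', B'; split=> //; first by rewrite -(size_sump (-1)) sumA'.
have sizeB' : size B = (size B').-1 by rewrite -diffB' size_diffp ?oppr_eq0.
have [le_B'1|] := leqP (size B') 1; last first.
  by move: sizeB'; rewrite sizeB; case: (size B') => // k; lia.
have B'C : B' = (B'`_0)%:P := size1_polyC le_B'1.
(* For [s <= 1] the new [B'] is constant: zero by antisymmetry when [s = 0],
   nonzero by the mod 3 argument when [s = 1]. *)
case: rep' => SE' _ _ symB'; case: s {rep sumA' diffB'} SE' symB' sizeB sizeB' => [|[|s]] //.
- move=> _ /(_ 0); rewrite B'C !hornerC expr1 mulN1r => /eqP; rewrite -subr_eq0 opprK.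
  by rewrite -mulr2n mulrn_eq0 /= -polyC_eq0 -B'C => /eqP ->; rewrite size_poly0.
- move=> SE' _ _ _; rewrite B'C size_polyC; apply/eqP; rewrite eqb1.
  apply: (@iter_sum2_alt_pow_const_neq0 A') => n.
  by rewrite SE' /alt_eval B'C hornerC coefC signr_odd.
- by move=> _ _ -> /esym; case: (size B') le_B'1 => [|[]].
Qed.
End AltPowSums.

Theorem mainTheorem6 (r m : nat) (hr : (0 < r)%N) (hm : (0 < m)%N) :
  exists F G : {poly rat},
    size F = m.+1 /\ size G = r /\
    forall n : nat, (0 < n)%N ->
      iter_sum (2 * r) (fun i => (-1) ^+ i * (i%:R) ^+ (2 * m)) n =
      (-1) ^+ n * F.[(n * (n + 2 * r))%:R] + G.[(n * (n + 2 * r))%:R].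
Proof.
have [A [B [[SE _ symA symB] sizeA sizeB]]] := exists_alt_rep hm (2 * r).
have oddA : odd (size A) by rewrite sizeA /= oddM.
have [F sizeF AF] := reflect_invariant_polyE symA oddA.
have symB' x : B.[- (2 * r)%:R - x] = B.[x] by rewrite symB -signr_odd oddM /= mul1r.
have oddB : odd (size B) by rewrite sizeB -(prednK hr) mulnS /= oddM.
have [G sizeG BG] := reflect_invariant_polyE symB' oddB.
exists F, G; split; first by rewrite sizeF sizeA /= mul2n doubleK.
split; first by rewrite sizeG sizeB -(prednK hr) mulnS /= mul2n doubleK.
by move=> n _; rewrite SE /alt_eval signr_odd AF BG -natrD -natrM.
Qed.
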